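(* Let $k,n$ be positive integers and let $G$ be a graph on $n$ vertices. Then $G\in\mathcal{F}(n,k)$ if and only if $G$ is $k$-maximal.
   Context: Graphs are finite, loopless, possibly with multiple edges. $\kappa'(G)$ is the edge connectivity and $\overline{\kappa'}(G)=\max\{\kappa'(H): H \text{ a subgraph of } G\}$. A graph $G$ is $k$-maximal if $\overline{\kappa'}(G)\le k$ but for any new edge $e\notin E(G)$ joining two vertices of $G$ (possibly parallel to an existing edge), $\overline{\kappa'}(G+e)\ge k+1$. $F(n,k)$ is the maximum number of edges of a graph on $n$ vertices with $\overline{\kappa'}\le k$, and $\mathcal{F}(n,k)=\{G: |V(G)|=n,\ \overline{\kappa'}(G)\le k,\ |E(G)|=F(n,k)\}$. *)

From mathcomp Require Import all_boot.
Set Implicit Arguments. Unset Strict Implicit. Unset Printing Implicit Defensive.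

(* A finite loopless multigraph on the vertex set 'I_n is given by an edge
   multiplicity function m : 'I_n -> 'I_n -> nat (m i j = number of edges
   joining i and j), which must be symmetric with zero diagonal. *)
Definition mgraph (n : nat) := 'I_n -> 'I_n -> nat.

Definition is_graph n (m : mgraph n) : Prop :=
  (forall i j, m i j = m j i) /\ (forall i, m i i = 0).

Definition nedges n (m : mgraph n) : nat :=
  \sum_(i < n) \sum_(j < n | i < j) m i j.

Definition is_subgraph n (m : mgraph n) (S : {set 'I_n}) (h : mgraph n) : Prop :=
  (forall i j, h i j = h j i) /\ (forall i j, h i j <= m i j) /\
  (forall i j, 0 < h i j -> (i \in S) && (j \in S)).

Definition cut n (S : {set 'I_n}) (h : mgraph n) (X : {set 'I_n}) : nat :=
  \sum_(i in X) \sum_(j in S :\: X) h i j.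

Definition kappa' n (S : {set 'I_n}) (h : mgraph n) : nat :=
  if #|S| <= 1 then 0 else
  \big[minn/(\sum_(i in S) \sum_(j in S) h i j)]_(X : {set 'I_n} |
      [&& X \subset S, X != set0 & X != S]) cut S h X.

Definition kbar_le n (m : mgraph n) (k : nat) : Prop :=
  forall S h, is_subgraph m S h -> kappa' S h <= k.

Definition add_edge n (m : mgraph n) (u v : 'I_n) : mgraph n :=
  fun i j => m i j + (((i == u) && (j == v)) || ((i == v) && (j == u))).

Definition kmaximal n (k : nat) (m : mgraph n) : Prop :=
  kbar_le m k /\
  forall u v : 'I_n, u != v -> ~ kbar_le (add_edge m u v) k.

(* G \in calF(n,k): G has n vertices, kbar'(G) <= k, and |E(G)| = F(n,k),
   i.e. |E(G)| is the maximum of |E(G')| over graphs G' on n vertices with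
   kbar'(G') <= k. *)
Definition in_calF n (k : nat) (m : mgraph n) : Prop :=
  is_graph m /\ kbar_le m k /\
  forall m' : mgraph n, is_graph m' -> kbar_le m' k -> nedges m' <= nedges m.

From mathcomp Require Import all_boot.
From mathcomp Require Import zify.
Set Implicit Arguments. Unset Strict Implicit. Unset Printing Implicit Defensive.

(* F(n,k) = k(n-1).  A graph with kbar' <= k on s >= 2 vertices has an edge cut
   with at most k edges; splitting along it and inducting on both sides gives at
   most k(s-1) edges.  In a k-maximal graph every such light cut has exactly k
   edges, since an edge added across a cut with fewer than k edges creates no
   subgraph of connectivity > k, and both sides are again k-maximal; hence it has
   exactly k(s-1) edges. *)

Lemma bigmin_le_seq (I : eqType) (r : seq I) (P : pred I) (F : I -> nat) x0 y :
  y \in r -> P y -> \big[minn/x0]_(i <- r | P i) F i <= F y.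
Proof.
elim: r => //= a r IH; rewrite in_cons big_cons => /orP[/eqP<- Py|yr Py].
  by rewrite Py geq_minl.
by case: ifP => _; rewrite ?geq_min IH ?orbT.
Qed.

Lemma bigmin_attained (I : Type) (r : seq I) (P : pred I) (F : I -> nat) x0 :
  \big[minn/x0]_(i <- r | P i) F i = x0 \/
  exists2 i, P i & \big[minn/x0]_(i <- r | P i) F i = F i.
Proof.
apply: (big_ind (fun m => m = x0 \/ exists2 i, P i & m = F i)); first by left.
  by move=> a b Ha Hb; rewrite /minn; case: ifP.
by move=> i Pi; right; exists i.
Qed.

Section Cuts.
Variable n : nat.
Implicit Types (g h : mgraph n) (S T X : {set 'I_n}).

Definition degsum g := \sum_(i < n) \sum_(j < n) g i j.

Definition induced g X : mgraph n :=
  fun i j => if (i \in X) && (j \in X) then g i j else 0.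

Definition cross g X :=
  \sum_(i < n) \sum_(j < n) (if (i \in X) && (j \notin X) then g i j else 0).

Definition supported g S := forall i j, 0 < g i j -> (i \in S) && (j \in S).

Definition proper_part S X := [&& X \subset S, X != set0 & X != S].

Lemma cutE S h X : cut S h X =
  \sum_(i < n) \sum_(j < n) (if (i \in X) && (j \in S :\: X) then h i j else 0).
Proof.
rewrite /cut big_mkcond; apply: eq_bigr => i _ /=.
by case: (i \in X); rewrite /= ?big_mkcond // big1.
Qed.

Lemma cut_supported S g X : supported g S -> cut S g X = cross g X.
Proof.
move=> sg; rewrite cutE /cross; apply: eq_bigr => i _; apply: eq_bigr => j _.
rewrite in_setD; case: (i \in X) (j \in X) => [] [] //=.
case jS: (j \in S) => //=.
by case: (posnP (g i j)) => // /sg; rewrite jS andbF.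
Qed.

Lemma cut_le_cross T h X : cut T h (T :&: X) <= cross h X.
Proof.
rewrite cutE /cross; apply: leq_sum => i _; apply: leq_sum => j _.
rewrite !in_setD !in_setI.
by case: (i \in T) (i \in X) (j \in T) (j \in X) => [] [] [] [].
Qed.

Lemma leq_cross g h X : (forall i j, h i j <= g i j) -> cross h X <= cross g X.
Proof.
by move=> le; apply: leq_sum => i _; apply: leq_sum => j _; case: ifP.
Qed.

Lemma crossC g X : (forall i j, g i j = g j i) -> cross g (~: X) = cross g X.
Proof.
move=> sg; rewrite /cross exchange_big; apply: eq_bigr => i _; apply: eq_bigr => j _.
by rewrite !in_setC negbK andbC sg.
Qed.

Lemma kappa'_le_cut T h X : proper_part T X -> kappa' T h <= cut T h X.
Proof.
move=> PX; rewrite /kappa'; case: ifP => // _.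
exact: bigmin_le_seq (mem_index_enum X) PX.
Qed.

Lemma kappa'_cut S h : 1 < #|S| -> exists2 X, proper_part S X & cut S h X <= kappa' S h.
Proof.
move=> S2; have [x xS] : exists x, x \in S by apply/card_gt0P; apply: ltnW.
have Px : proper_part S [set x].
  rewrite /proper_part sub1set xS -card_gt0 cards1 /=.
  by apply: contraTneq S2 => <-; rewrite cards1.
rewrite /kappa' leqNgt S2 /=.
(* If the minimum is the default value, the total degree sum, a singleton cut is below it. *)
have [->|[X PX ->]] := bigmin_attained (index_enum {set 'I_n}) (proper_part S)
  (cut S h) (\sum_(i in S) \sum_(j in S) h i j); last by exists X.
exists [set x] => //; rewrite /cut big_set1 [leqRHS](bigD1 x) //=.
apply: leq_trans (leq_addr _ _).
by rewrite [leqRHS](big_setID [set x]) leq_addl.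
Qed.

Lemma induced_le g X i j : induced g X i j <= g i j.
Proof. by rewrite /induced; case: ifP. Qed.

Lemma induced_graph g X : is_graph g -> is_graph (induced g X).
Proof.
move=> [gs gd]; split=> [i j|i]; rewrite /induced; first by rewrite andbC gs.
by rewrite gd; case: ifP.
Qed.

Lemma supported_induced g S X : supported g S -> supported (induced g X) (S :&: X).
Proof.
move=> sg i j; rewrite /induced; case: ifP => [/andP[iX jX]|]; last by rewrite ltnn.
by move/sg/andP=> [iS jS]; rewrite !in_setI iS iX jS jX.
Qed.

Lemma kbar_le_sub k g h : (forall i j, h i j <= g i j) -> kbar_le g k -> kbar_le h k.
Proof.
move=> le kg S h' [hs [hle hsup]]; apply: kg; split=> //; split=> // i j.
exact: leq_trans (hle i j) (le i j).
Qed.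

Lemma kappa'_le_cross g T h X : is_subgraph g T h ->
  T :&: X != set0 -> T :\: X != set0 -> kappa' T h <= cross g X.
Proof.
move=> [_ [hle _]] TX TmX.
have PX : proper_part T (T :&: X).
  rewrite /proper_part subsetIl TX /=; apply: contraNneq TmX => TXT.
  by rewrite setDE -{1}TXT -setIA setICr setI0.
apply: leq_trans (kappa'_le_cut h PX) _.
exact: leq_trans (cut_le_cross T h X) (leq_cross X hle).
Qed.

Lemma subgraph_add_edge g u v T h : is_subgraph (add_edge g u v) T h ->
  ~~ ((u \in T) && (v \in T)) -> is_subgraph g T h.
Proof.
move=> [hs [hle hsup]] uvT; split=> //; split=> // i j.
case: (posnP (h i j)) => [->//|/hsup/andP[iT jT]].
have := hle i j; rewrite /add_edge.
case: orP => [|_]; last by rewrite addn0.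
by case=> /andP[/eqP ei /eqP ej]; subst; rewrite iT jT in uvT.
Qed.

Lemma subgraph_add_edge_induced g X u v T h : is_subgraph (add_edge g u v) T h ->
  T \subset X -> is_subgraph (add_edge (induced g X) u v) T h.
Proof.
move=> [hs [hle hsup]] /subsetP TX; split=> //; split=> // i j.
case: (posnP (h i j)) => [->//|/hsup/andP[iT jT]].
by rewrite /add_edge /induced !TX.
Qed.

Lemma cross_add_edge_across g X u v : u \in X -> v \notin X ->
  cross (add_edge g u v) X <= (cross g X).+1.
Proof.
move=> uX vX; rewrite /cross /add_edge.
apply: (@leq_trans (\sum_(i < n) \sum_(j < n)
   ((if (i \in X) && (j \notin X) then g i j else 0) + ((i == u) && (j == v))))).
  apply: leq_sum => i _; apply: leq_sum => j _.
  case: ifP => [/andP[iX _]|//]; rewrite leq_add2l.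
  by case: (i =P v) => [iv|_]; [move: iX; rewrite iv (negbTE vX)|rewrite orbF].
under eq_bigr => i _ do rewrite big_split.
rewrite big_split /= -addn1 leq_add2l (bigD1 u) //= [X in _ + X]big1 ?addn0.
  rewrite (bigD1 v) //= !eqxx [X in _ + X]big1 // => j /negbTE ->.
  by rewrite andbF.
by move=> i /negbTE ->; rewrite big1.
Qed.

Lemma cross_add_edge_inside g X u v : u \in X -> v \in X ->
  cross (add_edge g u v) X = cross g X.
Proof.
move=> uX vX; rewrite /cross /add_edge; apply: eq_bigr => i _; apply: eq_bigr => j _.
case: ifP => [/andP[_ jX]|//].
have/negbTE-> : j != u by apply: contraNneq jX => ->.
have/negbTE-> : j != v by apply: contraNneq jX => ->.
by rewrite !andbF addn0.
Qed.

(* Only subgraphs containing the new edge are affected, and those are split by X. *)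
Lemma kbar_le_add_edge_across k g X u v : cross g X < k -> kbar_le g k ->
  u \in X -> v \notin X -> kbar_le (add_edge g u v) k.
Proof.
move=> crX kg uX vX T h Th.
have [/andP[uT vT]|uvT] := boolP ((u \in T) && (v \in T)); last first.
  exact: kg (subgraph_add_edge Th uvT).
apply: leq_trans (kappa'_le_cross (X := X) Th _ _) _.
- by apply/set0Pn; exists u; rewrite in_setI uT uX.
- by apply/set0Pn; exists v; rewrite in_setD vT vX.
exact: leq_trans (cross_add_edge_across g uX vX) crX.
Qed.

Lemma kbar_le_add_edge_inside k g X u v : cross g X <= k -> kbar_le g k ->
  u \in X -> v \in X -> kbar_le (add_edge (induced g X) u v) k ->
  kbar_le (add_edge g u v) k.
Proof.
(* A subgraph avoids X, lies inside X, or is split by X. *)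
move=> crX kg uX vX kX T h Th.
have [TX0|TX] := eqVneq (T :&: X) set0.
  apply: kg (subgraph_add_edge Th _); apply/negP => /andP[uT _].
  by move/setP/(_ u): TX0; rewrite in_setI uT uX in_set0.
have [TmX0|TmX] := eqVneq (T :\: X) set0.
  by apply: kX (subgraph_add_edge_induced Th _); rewrite -setD_eq0 TmX0.
apply: leq_trans (kappa'_le_cross Th TX TmX) _.
by rewrite cross_add_edge_inside.
Qed.

Lemma degsum_split g X : (forall i j, g i j = g j i) ->
  degsum g = degsum (induced g X) + degsum (induced g (~: X)) + 2 * cross g X.
Proof.
move=> gs.
have gE i j : g i j = induced g X i j + induced g (~: X) i j
   + (if (i \in X) && (j \notin X) then g i j else 0)
   + (if (j \in X) && (i \notin X) then g j i else 0).
  rewrite /induced !in_setC.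
  by case: (i \in X) (j \in X) => [] [] /=; rewrite ?addn0 ?add0n // gs.
rewrite {1}/degsum.
under eq_bigr => i _ do under eq_bigr => j _ do rewrite gE.
under eq_bigr => i _ do rewrite !big_split.
by rewrite !big_split /= mul2n -addnn !addnA [in X in _ + X]exchange_big.
Qed.

Lemma degsum_eq0 g S : is_graph g -> supported g S -> #|S| <= 1 -> degsum g = 0.
Proof.
move=> [_ gd] sg /card_le1_eqP S1; apply: big1 => i _; apply: big1 => j _.
case: (posnP (g i j)) => // /[dup] gij /sg/andP[iS jS].
by move: gij; rewrite (S1 _ _ iS jS) gd.
Qed.

Lemma proper_part_cards S X : proper_part S X ->
  [/\ #|S :&: X| < #|S|, #|S :&: ~: X| < #|S| &
      (#|S|).-1 = (#|S :&: X|).-1 + (#|S :&: ~: X|).-1 + 1].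
Proof.
move=> /and3P[sXS X0 XS].
have := cardsID X S; rewrite setDE.
have pos1 : 0 < #|S :&: X| by rewrite (setIidPr sXS) card_gt0.
have pos2 : 0 < #|S :&: ~: X|.
  rewrite -setDE card_gt0 setD_eq0; apply: contra XS => sSX.
  by rewrite eqEsubset sXS sSX.
split; lia.
Qed.

Lemma light_cut k g S : is_graph g -> supported g S -> kbar_le g k -> 1 < #|S| ->
  exists2 X, proper_part S X & cross g X <= k.
Proof.
move=> [gs _] sg kg S2; have [X PX cutX] := kappa'_cut g S2.
exists X => //; rewrite -(cut_supported X sg).
by apply: leq_trans cutX (kg _ _ _); split=> //; split.
Qed.

Lemma degsum_le k g S : is_graph g -> supported g S -> kbar_le g k ->
  degsum g <= 2 * k * (#|S|).-1.
Proof.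
have [N] := ubnP #|S|; elim: N S g => // N IH S g SN gG sg kg.
have [S1|S2] := leqP #|S| 1; first by rewrite (degsum_eq0 gG sg).
have [X PX crX] := light_cut gG sg kg S2.
have [ltX ltXc ->] := proper_part_cards PX.
have bound Y : #|S :&: Y| < #|S| ->
    degsum (induced g Y) <= 2 * k * (#|S :&: Y|).-1.
  move=> ltY; apply: IH (leq_trans ltY _) (induced_graph Y gG) _ _ => //.
    exact: supported_induced.
  exact: kbar_le_sub (induced_le g Y) kg.
rewrite (degsum_split X gG.1) !mulnDr muln1.
by rewrite !leq_add ?bound // leq_mul2l crX orbT.
Qed.

Definition saturated k g S :=
  forall u v, u \in S -> v \in S -> u != v -> ~ kbar_le (add_edge g u v) k.

Lemma saturated_cross k g S X : saturated k g S -> kbar_le g k ->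
  proper_part S X -> k <= cross g X.
Proof.
move=> satg kg PX; rewrite leqNgt; apply/negP => crX.
have : 0 < #|S :&: ~: X|.
  by have [ltX _ _] := proper_part_cards PX; move: (cardsID X S); rewrite setDE; lia.
case/card_gt0P => v; rewrite in_setI in_setC => /andP[vS vX].
move: PX => /and3P[/subsetP sXS /set0Pn[u uX] _].
apply: (satg u v (sXS u uX) vS); first by apply: contraNneq vX => <-.
exact: kbar_le_add_edge_across crX kg uX vX.
Qed.

Lemma saturated_induced k g S X : saturated k g S -> kbar_le g k ->
  cross g X <= k -> saturated k (induced g X) (S :&: X).
Proof.
move=> satg kg crX u v; rewrite !in_setI => /andP[uS uX] /andP[vS vX] uv kX.
exact: satg u v uS vS uv (kbar_le_add_edge_inside crX kg uX vX kX).
Qed.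

Lemma degsum_ge k g S : is_graph g -> supported g S -> kbar_le g k ->
  saturated k g S -> 2 * k * (#|S|).-1 <= degsum g.
Proof.
have [N] := ubnP #|S|; elim: N S g => // N IH S g SN gG sg kg satg.
have [S1|S2] := leqP #|S| 1; first by rewrite (_ : (#|S|).-1 = 0) ?muln0 //; lia.
have [X PX crX] := light_cut gG sg kg S2.
have [ltX ltXc ->] := proper_part_cards PX.
have bound Y : #|S :&: Y| < #|S| -> cross g Y <= k ->
    2 * k * (#|S :&: Y|).-1 <= degsum (induced g Y).
  move=> ltY crY; apply: IH (leq_trans ltY _) (induced_graph Y gG) _ _ _ => //.
  - exact: supported_induced.
  - exact: kbar_le_sub (induced_le g Y) kg.
  - exact: saturated_induced.
have crXc : cross g (~: X) <= k by rewrite (crossC X gG.1).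
rewrite (degsum_split X gG.1) !mulnDr muln1.
by rewrite !leq_add ?bound // (saturated_cross satg kg PX).
Qed.

Lemma degsum_nedges g : is_graph g -> degsum g = 2 * nedges g.
Proof.
move=> [gs gd].
have gE (i j : 'I_n) : g i j = (if i < j then g i j else 0) + (if j < i then g j i else 0).
  case: (ltngtP i j) => [_|_|/val_inj ->]; rewrite ?addn0 ?add0n ?gd //.
rewrite /degsum /nedges mul2n -addnn.
under eq_bigr => i _ do under eq_bigr => j _ do rewrite gE.
under eq_bigr => i _ do rewrite big_split.
rewrite big_split /= [in X in _ + X]exchange_big.
by congr (_ + _); apply: eq_bigr => i _; rewrite [in RHS]big_mkcond.
Qed.

Lemma add_edge_graph g u v : is_graph g -> u != v -> is_graph (add_edge g u v).
Proof.
move=> [gs gd] uv; split=> [i j|i]; rewrite /add_edge.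
  by rewrite gs; case: (i == u) (i == v) (j == u) (j == v) => [] [] [] [].
rewrite gd [(i == v) && _]andbC orbb.
by case: (i =P u) => [->|]; rewrite ?(negbTE uv).
Qed.

Lemma degsum_add_edge g u v : degsum g < degsum (add_edge g u v).
Proof.
rewrite /degsum /add_edge.
under [leqRHS]eq_bigr => i _ do rewrite big_split.
rewrite big_split /= -[ltnLHS]addn0 ltn_add2l.
by rewrite (bigD1 u) //= (bigD1 v) //= !eqxx.
Qed.

End Cuts.

Theorem lemma3p5 (k n : nat) (m : mgraph n) :
  0 < k -> 0 < n -> is_graph m -> (in_calF k m <-> kmaximal k m).
Proof.
move=> _ _ gm; have supT (g : mgraph n) : supported g setT by move=> i j; rewrite !in_setT.
split=> [[_ [km extremal]]|[km satm]].
  split=> // u v uv kuv; have := extremal _ (add_edge_graph gm uv) kuv.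
  rewrite -(leq_pmul2l (isT : 0 < 2)) -!degsum_nedges //; last exact: add_edge_graph.
  by rewrite leqNgt degsum_add_edge.
split=> //; split=> // m' gm' km'.
rewrite -(leq_pmul2l (isT : 0 < 2)) -!degsum_nedges //.
apply: leq_trans (degsum_le gm' (supT m') km') (degsum_ge gm (supT m) km _).
by move=> u v _ _; apply: satm.
Qed.
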